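(* For every $n\ge1$, every extended irregular dominating set of the path $P_n$ has at least $\lceil (n+1)/2\rceil$ vertices; that is, $\gamma_e(P_n)\ge\lceil (n+1)/2\rceil$.
   Context: $P_n$ is the path on $n$ vertices $[x_1,\dots,x_n]$ with edges $\{x_i,x_{i+1}\}$. In a finite simple graph $\Gamma=(V,E)$ with distance $d$, a vertex $v$ carrying a non-negative integer label $\ell$ dominates (covers) exactly the vertices $u$ with $d(u,v)=\ell$; a vertex labeled $0$ dominates only itself. An extended irregular dominating set is a set $S\subseteq V$ with a labeling $\lambda:S\to\mathbb{Z}_{\ge0}$ with distinct labels on distinct vertices, such that every vertex of $V$ is dominated by some vertex of $S$; some vertex of $S$ has label $0$. $\gamma_e(\Gamma)$ denotes the minimum cardinality of an extended irregular dominating set of $\Gamma$. *)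

From mathcomp Require Import all_boot all_order.
Set Implicit Arguments. Unset Strict Implicit. Unset Printing Implicit Defensive.

(* Vertices of P_n are 'I_n (x_1..x_n as 0..n-1), edges {i, i+1}.
   The graph distance in P_n between i and j is |i - j| = (i - j) + (j - i) with truncated subtraction. *)
Definition path_dist (n : nat) (i j : 'I_n) : nat := ((i : nat) - j) + ((j : nat) - i).

Definition ext_irr_dom (V : finType) (d : V -> V -> nat)
    (S : {set V}) (lam : V -> nat) : Prop :=
  {in S &, injective lam} /\
  (forall u : V, exists2 v, v \in S & d u v = lam v) /\
  (exists2 v, v \in S & lam v = 0).

From mathcomp Require Import all_boot all_order.
From mathcomp Require Import zify.
Set Implicit Arguments. Unset Strict Implicit. Unset Printing Implicit Defensive.

(* Choose for every vertex u a dominator v in S.  Since d(u, v) = lam v fixes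
   |u - v|, u is recovered from v together with the side of v on which u lies,
   so u |-> (v, v < u) injects the n vertices into S x bool.  The vertex v0
   labelled 0 dominates only itself, so (v0, true) is never hit: n < 2 |S|. *)

Lemma path_dist_eq0 n (u v : 'I_n) : (path_dist u v == 0) = (u == v).
Proof.
apply/eqP/eqP => [d0 | ->]; last by rewrite /path_dist subnn.
by apply/val_inj; move: d0; rewrite /path_dist /=; lia.
Qed.

Lemma path_dist_side_inj n (v u w : 'I_n) :
  path_dist u v = path_dist w v -> (v < u) = (v < w) -> u = w.
Proof.
rewrite /path_dist => duw side; apply/val_inj => /=.
by case: ltnP side duw => vu; case: ltnP => // vw _; lia.
Qed.

Lemma path_dom_card_lt n (S : {set 'I_n}) (lam : 'I_n -> nat) (v0 : 'I_n) :
    (forall u, exists2 v, v \in S & path_dist u v = lam v) ->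
    v0 \in S -> lam v0 = 0 ->
  n < #|S| * 2.
Proof.
case/fin_all_exists2=> dv dvS dv_dom v0S lam_v0.
pose side_of (u : 'I_n) := (dv u, dv u < u).
have side_of_inj : injective side_of.
  move=> u w [dvuw side_uw]; apply: (path_dist_side_inj (v := dv u)).
    by rewrite dv_dom dvuw dv_dom.
  by rewrite side_uw dvuw.
have side_of_neq_v0 u : side_of u != (v0, true).
  apply/negP; rewrite xpair_eqE => /andP[/eqP dvu /eqP v0u].
  have /eqP := dv_dom u; rewrite dvu lam_v0 path_dist_eq0 => /eqP u_v0.
  by move: v0u; rewrite dvu u_v0 ltnn.
have proper_img : side_of @: [set: 'I_n] \proper setX S [set: bool].
  apply/properP; split.
    by apply/subsetP => _ /imsetP[u _ ->]; rewrite !inE dvS.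
  exists (v0, true); first by rewrite !inE v0S.
  by apply/imsetP => -[u _ /eqP]; rewrite eq_sym (negbTE (side_of_neq_v0 u)).
by move: (proper_card proper_img); rewrite card_imset // cardsT card_ord cardsX cardsT card_bool.
Qed.

Theorem lemma5p6 (n : nat) (S : {set 'I_n}) (lam : 'I_n -> nat) :
  1 <= n -> ext_irr_dom (@path_dist n) S lam -> (n.+2) %/ 2 <= #|S|.
Proof.
move=> _ [_ [dom [v0 v0S lam_v0]]].
rewrite -ltnS ltn_divLR // mulSnr -addn2 ltn_add2r.
exact: path_dom_card_lt dom v0S lam_v0.
Qed.
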